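(* Let $P^1,\dots,P^4\in\mathbb{R}^n$ be in general position, let $Q^0$ be the equidistant point from $P^1,\dots,P^4$ with barycentric coordinate $\boldsymbol\lambda^0$, and suppose $\lambda^0_1<0$, $\lambda^0_2<0$, $\lambda^0_3\ge0$, $\lambda^0_4\ge0$. Let $Q^{1(1)}=\pi(Q^0|L(P^2,P^3,P^4))$ and $Q^{1(2)}=\pi(Q^0|L(P^1,P^3,P^4))$, with barycentric coordinates $\boldsymbol\lambda^{1(1)},\boldsymbol\lambda^{1(2)}$ about $P^1,\dots,P^4$, and suppose $\lambda^{1(2)}_1<0$. Suppose further $\lambda^{1(1)}_2\ge0$, $\lambda^{1(1)}_3<0$, $\lambda^{1(1)}_4\ge0$, and let $Q^{2\dagger}=\pi(Q^0|L(P^2,P^4))$. Then the center of the smallest enclosing circle of $P^1,\dots,P^4$ is $Q^\ast=Q^{2\dagger}$ and its radius is $d^\ast=d(P^2,Q^{2\dagger})$.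
   Context: $d$ is the Euclidean distance. Points are in general position if $P^2-P^1,\dots,P^m-P^1$ are linearly independent. $L(S^1,\dots,S^r)$ is the affine subspace spanned by the points; $\pi(Q'|L)$ is the orthogonal projection onto the affine subspace $L$. The barycentric coordinate of $Q\in L(P^1,\dots,P^m)$ is the unique $\boldsymbol\lambda$ with $\sum_i\lambda_i=1$, $Q=\sum_i\lambda_iP^i$. The equidistant point is the unique $Q^0\in L(P^1,\dots,P^m)$ with all $d(P^i,Q^0)$ equal. The smallest enclosing circle has center $Q^\ast$ attaining $\min_Q\max_i d(P^i,Q)$ and radius $d^\ast$ equal to this minimum. *)

From HB Require Import structures.
From mathcomp Require Import all_boot all_order all_algebra.
From mathcomp Require Import reals.
Set Implicit Arguments. Unset Strict Implicit. Unset Printing Implicit Defensive.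
Import Order.TTheory GRing.Theory Num.Theory.
Local Open Scope ring_scope.

Section Geometry.
Variables (R : realType) (n : nat).
Notation pt := 'rV[R]_n.

Definition dotp (x y : pt) : R := \sum_(j < n) x 0 j * y 0 j.
Definition dist (x y : pt) : R := Num.sqrt (dotp (x - y) (x - y)).

(* P^1,...,P^m in general position: P^2-P^1,...,P^m-P^1 linearly independent *)
Definition gen_pos (m : nat) (P : 'I_m.+1 -> pt) : Prop :=
  row_free (\matrix_(i < m) (P (lift ord0 i) - P ord0)).

Definition in_aff (S : seq pt) (x : pt) : Prop :=
  exists lam : seq R, size lam = size S /\
    \sum_(i < size S) lam`_i = 1 /\ x = \sum_(i < size S) lam`_i *: S`_i.

Definition is_proj (S : seq pt) (Q X : pt) : Prop :=
  in_aff S X /\ forall Y, in_aff S Y -> dotp (Q - X) (Y - X) = 0.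

Definition is_bary (m : nat) (P : 'I_m -> pt) (Q : pt) (lam : 'I_m -> R) : Prop :=
  \sum_(i < m) lam i = 1 /\ Q = \sum_(i < m) lam i *: P i.

Definition is_equidistant (m : nat) (P : 'I_m -> pt) (Q0 : pt) : Prop :=
  in_aff [seq P i | i <- enum 'I_m] Q0 /\
  forall i j, dist (P i) Q0 = dist (P j) Q0.

Definition maxdist (m : nat) (P : 'I_m -> pt) (Q : pt) : R :=
  \big[Num.max/0]_(i < m) dist (P i) Q.

Definition is_sec_center (m : nat) (P : 'I_m -> pt) (Q : pt) : Prop :=
  forall Q', maxdist P Q <= maxdist P Q'.

End Geometry.

(* indices 1..4 of the paper, as elements of 'I_4 *)
Definition i1 : 'I_4 := @Ordinal 4 0 isT.
Definition i2 : 'I_4 := @Ordinal 4 1 isT.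
Definition i3 : 'I_4 := @Ordinal 4 2 isT.
Definition i4 : 'I_4 := @Ordinal 4 3 isT.

From mathcomp Require Import all_boot all_order all_algebra reals.
From mathcomp Require Import ring lra.
Import Order.TTheory GRing.Theory Num.Theory.
Local Open Scope ring_scope.
Set Implicit Arguments. Unset Strict Implicit. Unset Printing Implicit Defensive.

(** Q2, the foot of the perpendicular from the equidistant point Q0 to the line
    P2P4, is the midpoint of P2P4; no circle of radius less than |P2 - Q2| can
    contain both P2 and P4, and the circle with diameter P2P4 is the unique
    smallest one as soon as it contains P1 and P3.  With
    f i = <P i - Q2, Q0 - Q2>, equidistance gives
    |P i - Q2|^2 = |P2 - Q2|^2 + 2 f i, and f2 = f4 = 0, so it suffices to show
    f1, f3 <= 0.  Averaging f with the barycentric weights of Q11, whose first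
    one vanishes because Q11 lies on the face P2P3P4 through Q2, gives
    lam11_3 f3 = <Q11 - Q2, Q0 - Q2> >= 0, hence f3 <= 0; averaging with the
    weights of Q0 gives lam0_1 f1 + lam0_3 f3 = |Q0 - Q2|^2 >= 0, hence f1 <= 0. *)

Section InnerProduct.
Variables (R : realType) (n : nat).
Implicit Types (x y z w : 'rV[R]_n) (a : R).

Lemma dotpC x y : dotp x y = dotp y x.
Proof. by apply: eq_bigr => j _; rewrite mulrC. Qed.

Lemma dotpDl x y z : dotp (x + y) z = dotp x z + dotp y z.
Proof. by rewrite /dotp -big_split; apply: eq_bigr => j _; rewrite !mxE mulrDl. Qed.

Lemma dotpZl a x z : dotp (a *: x) z = a * dotp x z.
Proof. by rewrite /dotp mulr_sumr; apply: eq_bigr => j _; rewrite !mxE mulrA. Qed.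

Lemma dotpNl x z : dotp (- x) z = - dotp x z.
Proof. by rewrite -scaleN1r dotpZl mulN1r. Qed.

Lemma dotpBl x y z : dotp (x - y) z = dotp x z - dotp y z.
Proof. by rewrite dotpDl dotpNl. Qed.

Lemma dotpDr x y z : dotp z (x + y) = dotp z x + dotp z y.
Proof. by rewrite dotpC dotpDl !(dotpC z). Qed.

Lemma dotpZr a x z : dotp z (a *: x) = a * dotp z x.
Proof. by rewrite dotpC dotpZl dotpC. Qed.

Lemma dotpNr x z : dotp z (- x) = - dotp z x.
Proof. by rewrite dotpC dotpNl dotpC. Qed.

Lemma dotpBr x y z : dotp z (x - y) = dotp z x - dotp z y.
Proof. by rewrite dotpDr dotpNr. Qed.

Lemma dotp0l z : dotp 0 z = 0.
Proof. by rewrite -(scale0r 0) dotpZl mul0r. Qed.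

Lemma dotp_suml m (F : 'I_m -> 'rV[R]_n) z :
  dotp (\sum_(i < m) F i) z = \sum_(i < m) dotp (F i) z.
Proof. by elim/big_rec2: _ => [|i a b _ <-]; rewrite ?dotp0l ?dotpDl. Qed.

Lemma dotpp_ge0 x : 0 <= dotp x x.
Proof. by apply: sumr_ge0 => j _; rewrite -expr2 sqr_ge0. Qed.

Lemma dotpp_eq0 x : dotp x x = 0 -> x = 0.
Proof.
move=> /eqP; rewrite psumr_eq0 => [/allP x0|j _]; last by rewrite -expr2 sqr_ge0.
apply/rowP => j; rewrite mxE; apply/eqP; rewrite -sqrf_eq0 expr2.
by apply: x0; rewrite mem_index_enum.
Qed.

Lemma dist_eq_sqr x y z w :
  (dist x y == dist z w) = (dotp (x - y) (x - y) == dotp (z - w) (z - w)).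
Proof. by rewrite /dist eqr_sqrt ?dotpp_ge0. Qed.

Lemma dist_le_sqr x y z w :
  (dist x y <= dist z w) = (dotp (x - y) (x - y) <= dotp (z - w) (z - w)).
Proof. by rewrite /dist ler_sqrt ?dotpp_ge0. Qed.

Lemma dotpp_split x y z : dotp (x - z) (x - z) =
  dotp (x - y) (x - y) - 2 * dotp (x - y) (z - y) + dotp (z - y) (z - y).
Proof.
have -> : x - z = (x - y) - (z - y) by rewrite opprB addrA subrK.
by rewrite !(dotpBl, dotpBr) ?(dotpC y x) ?(dotpC z x) ?(dotpC z y); ring.
Qed.

End InnerProduct.

Section AffineGeometry.
Variables (R : realType) (n : nat).
Implicit Types (x y z Q X Y : 'rV[R]_n).

Lemma in_aff2P x y X :
  in_aff [:: x; y] X <-> exists a b, a + b = 1 /\ X = a *: x + b *: y.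
Proof.
split=> [[l [ls [s e]]]|[a [b [ab ->]]]].
  case: l ls s e => [|a [|b []]] //= _; exists a, b.
  by move: s e; rewrite !big_ord_recl !big_ord0 /= !addr0.
by exists [:: a; b]; rewrite !big_ord_recl !big_ord0 /= !addr0.
Qed.

Lemma in_aff3P x y z X :
  in_aff [:: x; y; z] X <->
  exists a b c, a + b + c = 1 /\ X = a *: x + b *: y + c *: z.
Proof.
split=> [[l [ls [s e]]]|[a [b [c [abc ->]]]]].
  case: l ls s e => [|a [|b [|c []]]] //= _; exists a, b, c.
  by move: s e; rewrite !big_ord_recl !big_ord0 /= !addr0 !addrA.
by exists [:: a; b; c]; rewrite !big_ord_recl !big_ord0 /= !addr0 !addrA.
Qed.

Lemma in_aff2_l x y : in_aff [:: x; y] x.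
Proof. by apply/in_aff2P; exists 1, 0; rewrite addr0 scale1r scale0r addr0. Qed.

Lemma in_aff2_r x y : in_aff [:: x; y] y.
Proof. by apply/in_aff2P; exists 0, 1; rewrite add0r scale1r scale0r add0r. Qed.

Lemma dotp_bary m (P : 'I_m -> 'rV[R]_n) X (lam : 'I_m -> R) Y z :
  is_bary P X lam -> \sum_i lam i * dotp (P i - Y) z = dotp (X - Y) z.
Proof.
move=> [lam1 ->]; rewrite dotpBl dotp_suml.
under eq_bigr => i _ do rewrite dotpBl mulrBr.
rewrite sumrB -mulr_suml lam1 mul1r; congr (_ - _).
by apply: eq_bigr => i _; rewrite dotpZl.
Qed.

Lemma is_proj_dotp_ge0 S Q X Y :
  is_proj S Q X -> in_aff S Y -> 0 <= dotp (X - Y) (Q - Y).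
Proof.
move=> [_ orth] /orth orthY.
have -> : Q - Y = (Q - X) + (X - Y) by rewrite addrA subrK.
rewrite dotpDr.
have -> : dotp (X - Y) (Q - X) = 0 by rewrite dotpC -(opprB Y X) dotpNr orthY oppr0.
by rewrite add0r dotpp_ge0.
Qed.

Lemma equidist_shift x y Q Y : dist x Q = dist y Q ->
  dotp (x - Y) (x - Y) - 2 * dotp (x - Y) (Q - Y) =
  dotp (y - Y) (y - Y) - 2 * dotp (y - Y) (Q - Y).
Proof.
by move/eqP; rewrite dist_eq_sqr (dotpp_split x Y) (dotpp_split y Y) => /eqP; lra.
Qed.

Lemma equidist_dist_le x y Q Y : dist x Q = dist y Q ->
  dotp (y - Y) (Q - Y) = 0 -> dotp (x - Y) (Q - Y) <= 0 -> dist x Y <= dist y Y.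
Proof. by move=> /(equidist_shift Y) e yQ xQ; rewrite dist_le_sqr; lra. Qed.

Lemma proj_line_midpoint x y Q Y : is_proj [:: x; y] Q Y ->
  dist x Q = dist y Q -> (x - Y) + (y - Y) = 0.
Proof.
move=> [/in_aff2P [a [b [ab eY]]] orth] /(equidist_shift Y).
rewrite (dotpC (x - Y)) (dotpC (y - Y)) (orth _ (in_aff2_l x y)) (orth _ (in_aff2_r x y)).
rewrite !mulr0 !subr0.
have ex : x - Y = b *: (x - y).
  by rewrite eY -{1}[x]scale1r -ab scalerDl scalerBr opprD addrACA subrr add0r.
have ey : y - Y = - a *: (x - y).
  by rewrite eY -{1}[y]scale1r -ab scalerDl scaleNr scalerBr opprB opprD addrACA subrr addr0.
move=> sq; rewrite ex ey !(dotpZl, dotpZr) in sq.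
apply: dotpp_eq0; rewrite ex ey -scalerDl !(dotpZl, dotpZr).
move: sq; set W := dotp (x - y) (x - y) => sq.
have baW : (b - a) * W = 0.
  (* (b - a) W = (b - a)(a + b) W = b^2 W - a^2 W *)
  by rewrite -[b - a]mulr1 -ab; move: sq; clear; nra.
by rewrite baW mulr0.
Qed.

End AffineGeometry.

Section EnclosingCircle.
Variables (R : realType) (n : nat).
Implicit Types (x y Q Y : 'rV[R]_n).

Lemma parallelogram_midpoint x y Y Q : (x - Y) + (y - Y) = 0 ->
  dotp (x - Q) (x - Q) + dotp (y - Q) (y - Q) =
  2 * dotp (x - Y) (x - Y) + 2 * dotp (Y - Q) (Y - Q).
Proof.
move=> /eqP; rewrite addr_eq0 => /eqP yY.
rewrite (dotpp_split x Y) (dotpp_split y Y) yY.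
by rewrite dotpNl !dotpNr opprK -(opprB Y Q) !(dotpNl, dotpNr) opprK; lra.
Qed.

Lemma maxdist_ge m (P : 'I_m -> 'rV[R]_n) Q i : dist (P i) Q <= maxdist P Q.
Proof. exact: le_bigmax. Qed.

Lemma maxdist_le m (P : 'I_m -> 'rV[R]_n) Q r :
  0 <= r -> (forall i, dist (P i) Q <= r) -> maxdist P Q <= r.
Proof. by move=> r0 Pr; apply/bigmax_leP; split=> // i _; apply: Pr. Qed.

Lemma sec_center_midpoint m (P : 'I_m -> 'rV[R]_n) j k Y :
  (P j - Y) + (P k - Y) = 0 -> (forall i, dist (P i) Y <= dist (P j) Y) ->
  (forall Q, is_sec_center P Q <-> Q = Y) /\ maxdist P Y = dist (P j) Y.
Proof.
move=> mid inside.
have maxY : maxdist P Y = dist (P j) Y.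
  by apply/le_anti; rewrite maxdist_ge andbT maxdist_le ?sqrtr_ge0.
have far Q : dist (P j) Y <= dist (P j) Q \/ dist (P j) Y <= dist (P k) Q.
  have := parallelogram_midpoint Q mid; have := dotpp_ge0 (Y - Q).
  rewrite !dist_le_sqr; case: (lerP _ (dotp (P j - Q) (P j - Q))) => ?; first by left.
  by right; lra.
split=> // Q; split=> [centerQ|-> Q']; last first.
  by rewrite maxY; case: (far Q') => /le_trans; apply; apply: maxdist_ge.
have [jQ kQ] : dist (P j) Q <= dist (P j) Y /\ dist (P k) Q <= dist (P j) Y.
  by rewrite -maxY; split; apply: le_trans (centerQ Y); apply: maxdist_ge.
move: jQ kQ; rewrite !dist_le_sqr => jQ kQ.
have := parallelogram_midpoint Q mid; have := dotpp_ge0 (Y - Q) => YQ0 par.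
by apply/esym/subr0_eq/dotpp_eq0; lra.
Qed.

End EnclosingCircle.

Section Barycentric.
Variables (R : realType) (n : nat).

Lemma gen_pos_coef_eq0 m (P : 'I_m.+1 -> 'rV[R]_n) (c : 'I_m.+1 -> R) :
  gen_pos P -> \sum_i c i = 0 -> \sum_i c i *: P i = 0 -> forall i, c i = 0.
Proof.
move=> gp; rewrite !big_ord_recl => c0 cP0.
have c0E : c ord0 = - \sum_(i < m) c (lift ord0 i).
  by apply/eqP; rewrite -addr_eq0 c0.
pose A := \matrix_(i < m) (P (lift ord0 i) - P ord0).
pose v := \row_(i < m) c (lift ord0 i).
have vA : v *m A = 0 *m A.
  rewrite mul0mx mulmx_sum_row.
  under eq_bigr => i _ do rewrite rowK mxE scalerBr.
  by rewrite sumrB -scaler_suml -scaleNr -c0E addrC.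
have /rowP v0 := row_free_inj gp vA.
have cl i : c (lift ord0 i) = 0 by move: (v0 i); rewrite !mxE.
move=> i; case: (unliftP ord0 i) => [j ->|->]; first exact: cl.
by rewrite c0E big1 ?oppr0.
Qed.

Lemma bary_uniq m (P : 'I_m.+1 -> 'rV[R]_n) X lam mu :
  gen_pos P -> is_bary P X lam -> is_bary P X mu -> lam =1 mu.
Proof.
move=> gp [lam1 eX] [mu1 eX'] i; apply/eqP; rewrite -subr_eq0; apply/eqP.
apply: (gen_pos_coef_eq0 (c := fun i => lam i - mu i) gp).
  by rewrite sumrB lam1 mu1 subrr.
by under eq_bigr => k _ do rewrite scalerBl; rewrite sumrB -eX -eX' subrr.
Qed.

End Barycentric.

Lemma sum_ord4 (V : zmodType) (F : 'I_4 -> V) :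
  \sum_(i < 4) F i = F i1 + F i2 + F i3 + F i4.
Proof.
rewrite !big_ord_recl big_ord0 addr0 !addrA.
by congr (_ + _ + _ + _); congr F; apply/val_inj.
Qed.

Lemma ord4_ind (p : 'I_4 -> Prop) :
  p i1 -> p i2 -> p i3 -> p i4 -> forall i, p i.
Proof.
move=> p1 p2 p3 p4 [[|[|[|[|k]]]] lt_i4] //.
- by rewrite (_ : Ordinal _ = i1) //; apply: val_inj.
- by rewrite (_ : Ordinal _ = i2) //; apply: val_inj.
- by rewrite (_ : Ordinal _ = i3) //; apply: val_inj.
- by rewrite (_ : Ordinal _ = i4) //; apply: val_inj.
Qed.

Lemma bary_face_coef0 (R : realType) (n : nat) (P : 'I_4 -> 'rV[R]_n) X lam :
  gen_pos P -> in_aff [:: P i2; P i3; P i4] X -> is_bary P X lam -> lam i1 = 0.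
Proof.
move=> gp /in_aff3P [a [b [c [abc eX]]]] bX.
have bX' : is_bary P X (fun i => [:: 0; a; b; c]`_i).
  by split; rewrite sum_ord4 /= ?scale0r add0r.
exact: (bary_uniq gp bX bX').
Qed.

Theorem theorem11 (R : realType) (n : nat) (P : 'I_4 -> 'rV[R]_n)
  (Q0 Q11 Q12 Q2 : 'rV[R]_n) (lam0 lam11 lam12 : 'I_4 -> R) :
  gen_pos P ->
  is_equidistant P Q0 -> is_bary P Q0 lam0 ->
  lam0 i1 < 0 -> lam0 i2 < 0 -> 0 <= lam0 i3 -> 0 <= lam0 i4 ->
  is_proj [:: P i2; P i3; P i4] Q0 Q11 -> is_bary P Q11 lam11 ->
  is_proj [:: P i1; P i3; P i4] Q0 Q12 -> is_bary P Q12 lam12 ->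
  lam12 i1 < 0 ->
  0 <= lam11 i2 -> lam11 i3 < 0 -> 0 <= lam11 i4 ->
  is_proj [:: P i2; P i4] Q0 Q2 ->
  (forall Q, is_sec_center P Q <-> Q = Q2) /\
  maxdist P Q2 = dist (P i2) Q2.
Proof.
move=> gp [_ eqd] bary0 lam0_1 _ lam0_3 _ proj11 bary11 _ _ _ _ lam11_3 _ proj2.
have mid := proj_line_midpoint proj2 (eqd i2 i4).
pose f i := dotp (P i - Q2) (Q0 - Q2).
have [f2 f4] : f i2 = 0 /\ f i4 = 0.
  by split; rewrite /f dotpC proj2.2 //; [apply: in_aff2_l | apply: in_aff2_r].
have Q2_face : in_aff [:: P i2; P i3; P i4] Q2.
  have [/in_aff2P [a [b [ab ->]]] _] := proj2.
  by apply/in_aff3P; exists a, 0, b; rewrite addr0 scale0r addr0.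
have lam11_1 := bary_face_coef0 gp proj11.1 bary11.
have S0 : 0 <= lam0 i1 * f i1 + lam0 i3 * f i3.
  have := dotp_bary Q2 (Q0 - Q2) bary0; rewrite sum_ord4 -!/(f _) f2 f4 !mulr0 !addr0 => ->.
  exact: dotpp_ge0.
have S11 : 0 <= lam11 i3 * f i3.
  have := dotp_bary Q2 (Q0 - Q2) bary11; rewrite sum_ord4 -!/(f _) f2 f4 lam11_1.
  rewrite !mulr0 mul0r !add0r addr0 => ->.
  exact: is_proj_dotp_ge0 proj11 Q2_face.
have f3 : f i3 <= 0 by nra.
have f1 : f i1 <= 0 by nra.
apply: (sec_center_midpoint mid) => i.
apply: (equidist_dist_le (eqd i i2) f2).
by elim/ord4_ind: i; rewrite -/(f _) ?f2 ?f4.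
Qed.
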